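(* Let $p$ be a prime, $\lambda=(\lambda_1,\dots,\lambda_l)$ a non-increasing sequence of positive integers and $\alpha\in M_l(\mathbf Z)$. Then the Pontryagin dual of the extension $\xi(\alpha)$, namely $0\to\widehat{\mathbf T[p^\lambda]}\xrightarrow{\hat q}\widehat{L(\alpha)}\xrightarrow{\hat f}\widehat{\mathbf Z/p^\lambda}\to0$, regarded (via the pairing below) as an extension over $\mathbf T[p^\lambda]$ with kernel $\mathbf Z/p^\lambda$, is equivalent to the extension $\xi(\alpha^{T})$ associated to the transpose matrix.
   Context: $\mathbf T=\mathbf R/\mathbf Z$. Let $p^\lambda:\mathbf Z^l\to\mathbf Z^l$, $(x_i)\mapsto(p^{\lambda_i}x_i)$; $\mathbf Z/p^\lambda:=\mathbf Z^l/p^\lambda\mathbf Z^l$; $\mathbf T[p^\lambda]=\{\mu\in\mathbf T^l:p^{\lambda_i}\mu_i=0\ \forall i\}$. These finite groups are mutually Pontryagin dual via $(\mu,x)\mapsto\mu_1x_1+\dots+\mu_lx_l$. Let $a_\alpha:\mathbf Z^l\to\mathbf Z/p^\lambda$ send the $i$-th standard basis vector to the class of $(\alpha_{i1},\dots,\alpha_{il})$. The extension $\xi(\alpha):0\to\mathbf Z/p^\lambda\xrightarrow{f}L(\alpha)\xrightarrow{q}\mathbf T[p^\lambda]\to0$ is defined by $L(\alpha)=(\mathbf Z/p^\lambda\oplus\mathbf Z^l)/\{(a_\alpha(x),-p^\lambda x):x\in\mathbf Z^l\}$, $f(c)=[(c,0)]$, $q([(c,y)])=(y_1/p^{\lambda_1},\dots,y_l/p^{\lambda_l})\bmod\mathbf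 Z^l$. Two extensions $0\to K\to X\to Q\to0$ and $0\to K\to X'\to Q\to0$ are equivalent if there is an isomorphism $X\to X'$ compatible with the identity maps on $K$ and $Q$. *)

From HB Require Import structures.
From mathcomp Require Import all_boot all_algebra generic_quotient.
From mathcomp Require Import boolp reals.
Set Implicit Arguments. Unset Strict Implicit. Unset Printing Implicit Defensive.
Import GRing.Theory Num.Theory.
Local Open Scope ring_scope.
Local Open Scope quotient_scope.

Record subgrp (V : zmodType) := SubGrp {
  sg_mem :> V -> Prop;
  sg_0 : sg_mem 0;
  sg_B : forall x y, sg_mem x -> sg_mem y -> sg_mem (x - y) }.

Section QuotZmod.
Variables (V : zmodType) (S : subgrp V).

Definition qrel : rel V := fun x y => `[< S (x - y) >].

Lemma sg_N x : S x -> S (- x).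
Proof. by move=> Sx; rewrite -sub0r; apply: sg_B => //; apply: sg_0. Qed.

Lemma qrel_refl : reflexive qrel.
Proof. by move=> x; apply/asboolP; rewrite subrr; apply: sg_0. Qed.
Lemma qrel_sym : symmetric qrel.
Proof.
move=> x y; apply/asboolP/asboolP => /sg_N; by rewrite opprB.
Qed.
Lemma qrel_trans : transitive qrel.
Proof.
move=> y x z /asboolP Sxy /asboolP Syz; apply/asboolP.
have -> : x - z = (x - y) - (z - y) by rewrite opprB addrA subrK.
by apply: sg_B => //; rewrite -opprB; apply: sg_N.
Qed.

Definition qequiv := EquivRel qrel qrel_refl qrel_sym qrel_trans.
Definition quotZ := {eq_quot qequiv}.
HB.instance Definition _ := EqQuotient.on quotZ.
HB.instance Definition _ := Choice.on quotZ.

Lemma qrelD x x' y y' : qrel x x' -> qrel y y' -> qrel (x + y) (x' + y').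
Proof.
move=> /asboolP Sx /asboolP Sy; apply/asboolP.
have -> : (x + y) - (x' + y') = (x - x') - (y' - y).
  by rewrite opprD opprB addrACA addrC.
by apply: sg_B => //; rewrite -opprB; apply: sg_N.
Qed.

Lemma qrelN x x' : qrel x x' -> qrel (- x) (- x').
Proof. by move=> /asboolP Sx; apply/asboolP; rewrite -opprD; apply: sg_N. Qed.

Lemma repr_pi x : qrel (repr (\pi_quotZ x)) x.
Proof. by apply/(@eqmodP _ qequiv); rewrite reprK. Qed.

Definition qzero : quotZ := \pi_quotZ 0.
Definition qadd (a b : quotZ) : quotZ := \pi_quotZ (repr a + repr b).
Definition qopp (a : quotZ) : quotZ := \pi_quotZ (- repr a).

Lemma qaddE x y : qadd (\pi_quotZ x) (\pi_quotZ y) = \pi_quotZ (x + y).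
Proof. by apply/(@eqmodP _ qequiv); apply: qrelD; apply: repr_pi. Qed.
Lemma qoppE x : qopp (\pi_quotZ x) = \pi_quotZ (- x).
Proof. by apply/(@eqmodP _ qequiv); apply: qrelN; apply: repr_pi. Qed.

Lemma qaddA : associative qadd.
Proof.
move=> a b c; rewrite -[a](@reprK _ quotZ) -[b](@reprK _ quotZ) -[c](@reprK _ quotZ).
by rewrite !qaddE addrA.
Qed.
Lemma qaddC : commutative qadd.
Proof. by move=> a b; rewrite -[a](@reprK _ quotZ) -[b](@reprK _ quotZ) !qaddE addrC. Qed.
Lemma qadd0 : left_id qzero qadd.
Proof. by move=> a; rewrite -[a](@reprK _ quotZ) /qzero qaddE add0r. Qed.
Lemma qaddN : left_inverse qzero qopp qadd.
Proof. by move=> a; rewrite -[a](@reprK _ quotZ) qoppE qaddE addNr. Qed.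

HB.instance Definition _ := GRing.isZmodule.Build quotZ qaddA qaddC qadd0 qaddN.

Lemma piD x y : \pi_quotZ (x + y) = (\pi_quotZ x + \pi_quotZ y :> quotZ).
Proof. by rewrite -qaddE. Qed.
Lemma piN x : \pi_quotZ (- x) = (- \pi_quotZ x :> quotZ).
Proof. by rewrite -qoppE. Qed.
End QuotZmod.

Section Circle.
Variable R : realType.

Definition intZ_pred (x : R) : Prop := exists n : int, x = n%:~R.
Lemma intZ0 : intZ_pred 0. Proof. by exists 0; rewrite mulr0z. Qed.
Lemma intZB x y : intZ_pred x -> intZ_pred y -> intZ_pred (x - y).
Proof. by move=> [n ->] [m ->]; exists (n - m); rewrite intrB. Qed.
Definition intZ : subgrp R := SubGrp intZ0 intZB.

Definition circle : zmodType := quotZ intZ.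
End Circle.

Section Ext.
Variables (p l : nat) (lam : 'I_l -> nat).

Definition plam (x : 'rV[int]_l) : 'rV[int]_l :=
  \row_i ((p ^ lam i)%:Z * x 0 i).

Lemma plam0 : plam 0 = 0.
Proof. by apply/rowP => i; rewrite !mxE mulr0. Qed.
Lemma plamB x y : plam (x - y) = plam x - plam y.
Proof. by apply/rowP => i; rewrite !mxE mulrBr. Qed.

Definition plamZ_pred (c : 'rV[int]_l) : Prop := exists u, c = plam u.
Lemma plamZ0 : plamZ_pred 0. Proof. by exists 0; rewrite plam0. Qed.
Lemma plamZB x y : plamZ_pred x -> plamZ_pred y -> plamZ_pred (x - y).
Proof. by move=> [u ->] [v ->]; exists (u - v); rewrite plamB. Qed.
Definition plamZ : subgrp 'rV[int]_l := SubGrp plamZ0 plamZB.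

Definition Zplam : zmodType := quotZ plamZ.
Definition toZplam (c : 'rV[int]_l) : Zplam := \pi_Zplam c.

Definition a_ (alpha : 'M[int]_l) (x : 'rV[int]_l) : Zplam := toZplam (x *m alpha).

Lemma a_B alpha x y : a_ alpha (x - y) = a_ alpha x - a_ alpha y.
Proof. by rewrite /a_ /toZplam mulmxBl piD piN. Qed.

Definition Lrel_pred (alpha : 'M[int]_l) (v : Zplam * 'rV[int]_l) : Prop :=
  exists x : 'rV[int]_l, v = (a_ alpha x, - plam x).
Lemma Lrel0 alpha : Lrel_pred alpha 0.
Proof.
exists 0; rewrite plam0 oppr0 /a_ mul0mx /toZplam; congr (_, _).
Qed.
Lemma LrelB alpha v w : Lrel_pred alpha v -> Lrel_pred alpha w ->
  Lrel_pred alpha (v - w).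
Proof.
move=> [x ->] [y ->]; exists (x - y).
rewrite a_B plamB; apply: injective_projections => //=.
by rewrite opprB opprK addrC.
Qed.
Definition Lrel alpha : subgrp (Zplam * 'rV[int]_l)%type :=
  SubGrp (Lrel0 alpha) (@LrelB alpha).

(* L(alpha) := (Z/p^lambda (+) Z^l) / {(a_alpha(x), -p^lambda x)} *)
Definition L (alpha : 'M[int]_l) : zmodType := quotZ (Lrel alpha).

Definition fL alpha (c : Zplam) : L alpha := \pi_(L alpha) (c, 0).

Variable R : realType.

Definition Tplam : {pred 'rV[circle R]_l} :=
  fun mu => [forall i, (mu 0 i) *+ (p ^ lam i) == 0].

Definition qL alpha (v : L alpha) : 'rV[circle R]_l :=
  \row_i \pi_(circle R) (((repr v).2 0 i)%:~R / (p ^ lam i)%:R : R).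

Definition pairing (mu : 'rV[circle R]_l) (x : Zplam) : circle R :=
  \sum_i (mu 0 i) *~ ((repr x) 0 i).

End Ext.

Definition Pdual (R : realType) (G : zmodType) :=
  { chi : G -> circle R | forall a b, chi (a + b) = chi a + chi b }.

From HB Require Import structures.
From mathcomp Require Import all_boot all_algebra generic_quotient.
From mathcomp Require Import boolp reals ring.
Import GRing.Theory Num.Theory.
Local Open Scope ring_scope.
Local Open Scope quotient_scope.
Set Implicit Arguments. Unset Strict Implicit. Unset Printing Implicit Defensive.

(* A character chi of L(alpha) is determined by its values mu_i on the classes
   of (e_i, 0) and tau_j on those of (0, e_j), which satisfy
   p^lambda_i mu_i = 0 and p^lambda_j tau_j = sum_i alpha_ji mu_i in T.  For
   real lifts of mu and tau, the numbers m_i = p^lambda_i mu_i and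
   d_j = p^lambda_j tau_j - sum_i alpha_ji mu_i are therefore integers, and
   changing the lifts by integer vectors x, k changes (d, m) by
   (x alpha^T + p^lambda k, - p^lambda x), which is precisely a relation of
   L(alpha^T).  Hence chi |-> [(d, m)] is a well defined additive map, inverse
   to [(d, m)] |-> the character with mu = m / p^lambda and
   tau = (d + alpha mu) / p^lambda.  Since q sends [(d, m)] to m / p^lambda =
   mu, pairing it with c gives sum_i c_i mu_i = chi(f(c)); and the character
   <q(-), x> has mu = 0 and tau = x / p^lambda, i.e. coordinates (x, 0), so it
   goes to f(x). *)

Lemma morphD_nmod_morphism (U V : zmodType) (f : U -> V) :
  {morph f : x y / x + y} -> nmod_morphism f.
Proof. by move=> fD; split=> //; apply: (addrI (f 0)); rewrite -fD !addr0. Qed.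

Lemma raddf_row_sum_delta (n : nat) (V : zmodType)
    (f : {additive 'rV[int]_n -> V}) (c : 'rV[int]_n) :
  f c = \sum_i f 'e_i *~ c 0 i.
Proof.
rewrite {1}(row_sum_delta c) raddf_sum; apply: eq_bigr => i _.
by rewrite -[in LHS](intz (c 0 i)) scaler_int raddfMz.
Qed.

Lemma pairD (U V : zmodType) (a a' : U) (b b' : V) :
  (a + a', b + b') = (a, b) + (a', b').
Proof. by []. Qed.

Section QuotientLift.
Variables (V W : zmodType) (S : subgrp V).

Lemma quotZ_eqP (a b : V) : \pi_(quotZ S) a = \pi_(quotZ S) b <-> S (a - b).
Proof.
split => [/(@eqmodP _ (qequiv S)) /asboolP //|Sab].
by apply/(@eqmodP _ (qequiv S)); apply/asboolP.
Qed.

Variable g : V -> W.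
Hypotheses (gD : {morph g : a b / a + b}) (g_eq0 : forall s, S s -> g s = 0).

Definition quot_lift (a : quotZ S) : W := g (repr a).

Lemma quot_liftE (a : V) : quot_lift (\pi_(quotZ S) a) = g a.
Proof.
have /g_eq0 Sa : S (repr (\pi_(quotZ S) a) - a) by apply/quotZ_eqP; rewrite reprK.
by rewrite /quot_lift -[repr _](subrK a) gD Sa add0r.
Qed.

Lemma quot_liftD : {morph quot_lift : a b / a + b}.
Proof. by move=> a b; rewrite -[a]reprK -[b]reprK -piD !quot_liftE gD. Qed.

End QuotientLift.

Section Circle.
Variable R : realType.

Definition circ (r : R) : circle R := \pi_(circle R) r.

HB.instance Definition _ :=
  GRing.isNmodMorphism.Build R (circle R) circ (morphD_nmod_morphism (@piD _ _)).

Lemma circ_eq (r s : R) : circ r = circ s <-> exists n : int, r - s = n%:~R.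
Proof. exact: quotZ_eqP. Qed.

Lemma circ_intr (n : int) : circ n%:~R = 0.
Proof. by rewrite -(raddf0 circ); apply/circ_eq; exists n; rewrite subr0. Qed.

Lemma int_row_of_circ_eq (n : nat) (F G : 'I_n -> R) :
  (forall i, circ (F i) = circ (G i)) ->
  exists z : 'rV[int]_n, forall i, F i = G i + (z 0 i)%:~R.
Proof.
move=> FG; exists (\row_i Num.floor (F i - G i)) => i.
have [k Ek] := iffLR (circ_eq _ _) (FG i).
by rewrite mxE Ek intrKfloor -Ek addrC subrK.
Qed.

Variable G : zmodType.

HB.instance Definition _ (chi : Pdual R G) :=
  GRing.isNmodMorphism.Build G (circle R) (sval chi)
    (morphD_nmod_morphism (proj2_sig chi)).

Lemma Pdual_ext (chi1 chi2 : Pdual R G) : sval chi1 =1 sval chi2 -> chi1 = chi2.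
Proof.
case: chi1 chi2 => [f1 f1D] [f2 f2D] /= /funext f12; subst f2.
by congr exist; apply: Prop_irrelevance.
Qed.

End Circle.

Section Duality.
Variables (R : realType) (p l : nat) (lam : 'I_l -> nat) (alpha : 'M[int]_l).
Hypothesis p_gt0 : (0 < p)%N.

Local Notation Zp := (Zplam p lam).
Local Notation tZ := (toZplam p lam).

HB.instance Definition _ :=
  GRing.isNmodMorphism.Build _ Zp tZ (morphD_nmod_morphism (@piD _ _)).

Lemma toZplam_eq0P (c : 'rV[int]_l) : tZ c = 0 <-> exists k, c = plam p lam k.
Proof.
rewrite -(raddf0 tZ); split=> [/quotZ_eqP [k]|[k ->]].
  by rewrite subr0; exists k.
by apply/quotZ_eqP; exists k; rewrite subr0.
Qed.

Lemma toZplam_plam k : tZ (plam p lam k) = 0.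
Proof. by apply/toZplam_eq0P; exists k. Qed.

Lemma plam_delta i : plam p lam 'e_i = 'e_i *+ (p ^ lam i).
Proof.
apply/rowP => k; rewrite mulmxnE !mxE eqxx /=.
by case: eqP => [->|_]; rewrite ?mulr1 ?mulr1n ?natz ?mulr0 ?mul0rn.
Qed.

Definition ppow i : R := (p ^ lam i)%:R.

Lemma ppow_neq0 i : ppow i != 0.
Proof. by rewrite pnatr_eq0 -lt0n expn_gt0 p_gt0. Qed.

Definition dotR (v : 'I_l -> R) (c : 'rV[int]_l) : R := \sum_i (c 0 i)%:~R * v i.

Lemma dotR_morphD v : {morph dotR v : a b / a + b}.
Proof.
by move=> a b; rewrite -big_split; apply: eq_bigr => i _; rewrite mxE intrD mulrDl.
Qed.

HB.instance Definition _ v :=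
  GRing.isNmodMorphism.Build _ _ (dotR v) (morphD_nmod_morphism (dotR_morphD v)).

Lemma dotR_delta v i : dotR v 'e_i = v i.
Proof.
rewrite /dotR (bigD1 i) //= big1 ?addr0 => [|k /negbTE ki].
  by rewrite mxE !eqxx mul1r.
by rewrite mxE ki andbF mul0r.
Qed.

Lemma dotR_plam v x :
  dotR v (plam p lam x) = \sum_i (x 0 i)%:~R * (ppow i * v i).
Proof.
by apply: eq_bigr => i _; rewrite mxE intrM -pmulrn mulrA [_ *+ _ * _]mulrC.
Qed.

Lemma dotR_mulmx v (x : 'rV[int]_l) (beta : 'M[int]_l) :
  dotR v (x *m beta) = \sum_j (x 0 j)%:~R * dotR v (row j beta).
Proof.
rewrite mulmx_sum_row raddf_sum; apply: eq_bigr => j _.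
by rewrite -[x 0 j]intz scaler_int raddfMz mulrzl intz.
Qed.

Lemma circ_dotR v c : circ (dotR v c) = \sum_i circ (v i) *~ c 0 i.
Proof. by rewrite raddf_sum; apply: eq_bigr => i _; rewrite mulrzl raddfMz. Qed.

Definition mu_of (m : 'rV[int]_l) i : R := (m 0 i)%:~R / ppow i.

Definition tau_of (d m : 'rV[int]_l) j : R :=
  ((d 0 j)%:~R + dotR (mu_of m) (row j alpha)) / ppow j.

Lemma mu_ofK m i : ppow i * mu_of m i = (m 0 i)%:~R.
Proof. by rewrite mulrC divfK ?ppow_neq0. Qed.

Lemma tau_ofK d m j :
  ppow j * tau_of d m j = (d 0 j)%:~R + dotR (mu_of m) (row j alpha).
Proof. by rewrite mulrC divfK ?ppow_neq0. Qed.

Lemma dotR_mu_ofC (y c : 'rV[int]_l) : dotR (mu_of y) c = dotR (mu_of c) y.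
Proof. by apply: eq_bigr => i _; rewrite /mu_of mulrCA. Qed.

Lemma mu_ofD m m' i : mu_of (m + m') i = mu_of m i + mu_of m' i.
Proof. by rewrite /mu_of mxE intrD mulrDl. Qed.

Lemma mu_of_shift m x i :
  mu_of (m - plam p lam x) i = mu_of m i - (x 0 i)%:~R.
Proof.
rewrite /mu_of !mxE intrB intrM -pmulrn -/(ppow i); field.
exact: ppow_neq0.
Qed.

Lemma mu_of_inj m m' : mu_of m =1 mu_of m' -> m = m'.
Proof. by move=> E; apply/rowP => i; apply: (@intr_inj R); rewrite -!mu_ofK E. Qed.

Lemma dotR_mu_of_plam r x :
  dotR (mu_of r) (plam p lam x) = (\sum_i x 0 i * r 0 i)%:~R.
Proof.
rewrite dotR_plam rmorph_sum; apply: eq_bigr => i _ /=.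
by rewrite mu_ofK intrM mulrC.
Qed.

Lemma tau_ofD d d' m m' j :
  tau_of (d + d') (m + m') j = tau_of d m j + tau_of d' m' j.
Proof.
rewrite /tau_of dotR_mu_ofC raddfD /= !(dotR_mu_ofC (row j alpha)) mxE intrD.
by rewrite -mulrDl addrACA.
Qed.

Lemma tau_of_inj d d' m : tau_of d m =1 tau_of d' m -> d = d'.
Proof.
move=> E; apply/rowP => j; apply: (@intr_inj R).
by apply: (addIr (dotR (mu_of m) (row j alpha))); rewrite -!tau_ofK E.
Qed.

Lemma tau_of_shift d m x k j :
  tau_of (d + x *m alpha^T + plam p lam k) (m - plam p lam x) j =
  tau_of d m j + (k 0 j)%:~R.
Proof.
rewrite /tau_of.
have -> : dotR (mu_of (m - plam p lam x)) (row j alpha) =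
    dotR (mu_of m) (row j alpha) - ((x *m alpha^T) 0 j)%:~R.
  rewrite dotR_mu_ofC raddfB /= dotR_mu_of_plam (dotR_mu_ofC (row j alpha)) !mxE.
  by congr (_ - _%:~R); apply: eq_bigr => i _; rewrite !mxE.
rewrite !mxE !intrD intrM -pmulrn -/(ppow j); field.
exact: ppow_neq0.
Qed.

Lemma L_pi_eqP (beta : 'M[int]_l) d m d' m' :
  \pi_(L p lam beta) (tZ d, m) = \pi_(L p lam beta) (tZ d', m') <->
  exists x k, d = d' + x *m beta + plam p lam k /\ m = m' - plam p lam x.
Proof.
split=> [/quotZ_eqP [x]|[x [k [-> ->]]]].
  rewrite -[_ - _]/(_ - _, _ - _) /a_ => -[tZE mE].
  have /toZplam_eq0P [k Ek] : tZ (d - d' - x *m beta) = 0.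
    by rewrite !raddfB /= tZE subrr.
  exists x, k; split; apply/eqP.
    by rewrite [d' + _ + _]addrC -subr_eq opprD addrA Ek.
  by rewrite addrC -subr_eq mE.
apply/quotZ_eqP; exists x; rewrite -[_ - _]/(_ - _, _ - _) /a_.
by rewrite !raddfD /= toZplam_plam addr0 addrAC subrr add0r addrC addKr.
Qed.

Lemma L_pi_repr (beta : 'M[int]_l) (v : L p lam beta) :
  \pi_(L p lam beta) (tZ (repr (repr v).1), (repr v).2) = v.
Proof. by rewrite /toZplam reprK -surjective_pairing reprK. Qed.

Local Notation LA := (L p lam alpha).
Local Notation LT := (L p lam alpha^T).

Section Characters.
Variable chi : Pdual R LA.

Definition charK (c : 'rV[int]_l) : circle R := sval chi (fL alpha (tZ c)).
Definition charY (y : 'rV[int]_l) : circle R := sval chi (\pi_LA (0, y)).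

Lemma charK_morphD : {morph charK : a b / a + b}.
Proof. by move=> a b; rewrite /charK /fL -raddfD -piD -pairD addr0 raddfD. Qed.

Lemma charY_morphD : {morph charY : a b / a + b}.
Proof. by move=> a b; rewrite /charY -raddfD -piD -pairD addr0. Qed.

HB.instance Definition _ :=
  GRing.isNmodMorphism.Build _ _ charK (morphD_nmod_morphism charK_morphD).
HB.instance Definition _ :=
  GRing.isNmodMorphism.Build _ _ charY (morphD_nmod_morphism charY_morphD).

Lemma charE c y : sval chi (\pi_LA (tZ c, y)) = charK c + charY y.
Proof. by rewrite /charK /charY /fL -raddfD -piD -pairD addr0 add0r. Qed.

Lemma charE_sum c y :
  sval chi (\pi_LA (tZ c, y)) =
  \sum_i charK 'e_i *~ c 0 i + \sum_j charY 'e_j *~ y 0 j.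
Proof. by rewrite charE -!raddf_row_sum_delta. Qed.

Lemma charK_torsion i : charK 'e_i *+ (p ^ lam i) = 0.
Proof. by rewrite -raddfMn /= -plam_delta /charK toZplam_plam; apply: raddf0. Qed.

Lemma charY_relation j :
  charY 'e_j *+ (p ^ lam j) = \sum_i charK 'e_i *~ alpha j i.
Proof.
have -> : \sum_i charK 'e_i *~ alpha j i = charK (row j alpha).
  by rewrite [RHS]raddf_row_sum_delta; apply: eq_bigr => i _; rewrite mxE.
rewrite -raddfMn /= -plam_delta /charY /charK /fL.
congr (sval chi _); symmetry; apply/quotZ_eqP; exists 'e_j.
by rewrite /a_ -rowE -[_ - _]/(_ - _, _ - _) subr0 sub0r.
Qed.

Definition is_coords (d m : 'rV[int]_l) :=
  (forall i, circ (mu_of m i) = charK 'e_i) /\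
  (forall j, circ (tau_of d m j) = charY 'e_j).

Lemma is_coords_exists : exists dm : 'rV[int]_l * 'rV[int]_l, is_coords dm.1 dm.2.
Proof.
pose mu' i := repr (charK 'e_i); pose tau' j := repr (charY 'e_j).
have circ_mu' i : circ (mu' i) = charK 'e_i by exact: reprK.
have circ_tau' j : circ (tau' j) = charY 'e_j by exact: reprK.
have [m Em] : exists m : 'rV[int]_l, forall i, ppow i * mu' i = 0 + (m 0 i)%:~R.
  apply: int_row_of_circ_eq => i.
  by rewrite raddf0 /ppow mulr_natl raddfMn /= circ_mu' charK_torsion.
have mu'E i : mu' i = mu_of m i.
  by rewrite /mu_of -[(m 0 i)%:~R]add0r -Em mulrC mulKf ?ppow_neq0.
have [d Ed] : exists d : 'rV[int]_l, forall j,
    ppow j * tau' j - dotR mu' (row j alpha) = 0 + (d 0 j)%:~R.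
  apply: int_row_of_circ_eq => j.
  rewrite raddf0 raddfB /= /ppow mulr_natl raddfMn /= circ_tau' charY_relation.
  apply/eqP; rewrite circ_dotR subr_eq0; apply/eqP.
  by apply: eq_bigr => i _; rewrite circ_mu' mxE.
exists (d, m); split=> [i|j] /=; first by rewrite -mu'E.
rewrite /tau_of; have -> : dotR (mu_of m) (row j alpha) = dotR mu' (row j alpha).
  by apply: eq_bigr => i _; rewrite mu'E.
by rewrite -[(d 0 j)%:~R]add0r -Ed subrK mulrC mulKf ?ppow_neq0.
Qed.

End Characters.

Lemma is_coords_uniq chi d m d' m' : is_coords chi d m -> is_coords chi d' m' ->
  \pi_LT (tZ d, m) = \pi_LT (tZ d', m').
Proof.
move=> [muE tauE] [muE' tauE'].
have [x Ex] := int_row_of_circ_eq (F := mu_of m') (G := mu_of m)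
  (fun i => etrans (muE' i) (esym (muE i))).
have Em : m = m' - plam p lam x.
  by apply: mu_of_inj => i; rewrite mu_of_shift Ex addrK.
have [k Ek] := int_row_of_circ_eq (F := tau_of d m) (G := tau_of d' m')
  (fun j => etrans (tauE j) (esym (tauE' j))).
apply/L_pi_eqP; exists x, k; split=> //.
by apply: (@tau_of_inj _ _ m) => j; rewrite Ek Em tau_of_shift.
Qed.

Lemma is_coords_shift chi d m d' m' : is_coords chi d m ->
  \pi_LT (tZ d, m) = \pi_LT (tZ d', m') -> is_coords chi d' m'.
Proof.
move=> [muE tauE] /L_pi_eqP [x [k [Ed Em]]]; split=> [i|j].
  by rewrite -muE Em mu_of_shift raddfB /= circ_intr subr0.
by rewrite -tauE Ed Em tau_of_shift raddfD /= circ_intr addr0.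
Qed.

Lemma is_coords_inj chi1 chi2 d m :
  is_coords chi1 d m -> is_coords chi2 d m -> chi1 = chi2.
Proof.
move=> [muE1 tauE1] [muE2 tauE2]; apply: Pdual_ext => v.
rewrite -[v]L_pi_repr !charE_sum; congr (_ + _); apply: eq_bigr => i _.
  by rewrite -muE1 muE2.
by rewrite -tauE1 tauE2.
Qed.

Definition coords chi : 'rV[int]_l * 'rV[int]_l := sval (cid (is_coords_exists chi)).

Lemma coordsP chi : is_coords chi (coords chi).1 (coords chi).2.
Proof. by rewrite /coords; case: cid. Qed.

Definition dual_to_transpose chi : LT := \pi_LT (tZ (coords chi).1, (coords chi).2).

Lemma dual_to_transposeE chi d m :
  is_coords chi d m -> dual_to_transpose chi = \pi_LT (tZ d, m).
Proof. exact: is_coords_uniq (coordsP chi). Qed.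

Lemma dotR_relation d m x :
  dotR (mu_of m) (x *m alpha) - dotR (tau_of d m) (plam p lam x) =
  - (\sum_j x 0 j * d 0 j)%:~R.
Proof.
rewrite dotR_mulmx dotR_plam rmorph_sum -!sumrN -big_split /=.
by apply: eq_bigr => j _; rewrite tau_ofK intrM; ring.
Qed.

Definition Zp_char m : Zp -> circle R :=
  quot_lift (S := plamZ p lam) (fun c => circ (dotR (mu_of m) c)).

Lemma Zp_char_morphD m : {morph Zp_char m : a b / a + b}.
Proof.
apply: quot_liftD => [a b|_ [k ->]]; first by rewrite !raddfD.
by rewrite dotR_mu_of_plam circ_intr.
Qed.

Lemma Zp_charE m c : Zp_char m (tZ c) = circ (dotR (mu_of m) c).
Proof.
apply: quot_liftE => [a b|_ [k ->]]; first by rewrite !raddfD.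
by rewrite dotR_mu_of_plam circ_intr.
Qed.

Definition Lchar_fun d m (u : Zp * 'rV[int]_l) : circle R :=
  Zp_char m u.1 + circ (dotR (tau_of d m) u.2).

Lemma Lchar_fun_morphD d m : {morph Lchar_fun d m : a b / a + b}.
Proof. by move=> a b; rewrite /Lchar_fun /= Zp_char_morphD !raddfD addrACA. Qed.

Lemma Lchar_fun_Lrel d m s : Lrel p lam alpha s -> Lchar_fun d m s = 0.
Proof.
move=> [x ->]; rewrite /Lchar_fun /= /a_ Zp_charE -raddfD raddfN /=.
by rewrite dotR_relation -intrN circ_intr.
Qed.

Definition char_of d m : Pdual R LA :=
  exist _ (quot_lift (Lchar_fun d m))
    (quot_liftD (Lchar_fun_morphD d m) (@Lchar_fun_Lrel d m)).

Lemma char_ofE d m c y :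
  sval (char_of d m) (\pi_LA (tZ c, y)) =
  circ (dotR (mu_of m) c + dotR (tau_of d m) y).
Proof.
rewrite /= (quot_liftE (Lchar_fun_morphD d m) (@Lchar_fun_Lrel d m)).
by rewrite /Lchar_fun /= Zp_charE raddfD.
Qed.

Lemma char_of_coords d m : is_coords (char_of d m) d m.
Proof.
split=> [i|j].
  by rewrite /charK /fL char_ofE raddf0 addr0 dotR_delta.
rewrite -[charY _ _]add0r -(raddf0 (charK (char_of d m))) -charE char_ofE.
by rewrite (raddf0 (dotR _)) add0r dotR_delta.
Qed.

Definition transpose_to_dual (w : LT) : Pdual R LA :=
  char_of (repr (repr w).1) (repr w).2.

Lemma transpose_to_dual_coords d m :
  is_coords (transpose_to_dual (\pi_LT (tZ d, m))) d m.
Proof. by apply: is_coords_shift (char_of_coords _ _) _; rewrite L_pi_repr. Qed.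

Lemma dual_to_transposeK : cancel dual_to_transpose transpose_to_dual.
Proof.
move=> chi; apply: is_coords_inj (coordsP chi).
exact: transpose_to_dual_coords.
Qed.

Lemma transpose_to_dualK : cancel transpose_to_dual dual_to_transpose.
Proof.
move=> w; rewrite -{1}[w]L_pi_repr.
by rewrite (dual_to_transposeE (transpose_to_dual_coords _ _)) L_pi_repr.
Qed.

Lemma dual_to_transposeD (chi1 chi2 chi3 : Pdual R LA) :
  (forall v, sval chi3 v = sval chi1 v + sval chi2 v) ->
  dual_to_transpose chi3 = dual_to_transpose chi1 + dual_to_transpose chi2.
Proof.
move=> chi3E; have [muE1 tauE1] := coordsP chi1; have [muE2 tauE2] := coordsP chi2.
rewrite (@dual_to_transposeE chi3 ((coords chi1).1 + (coords chi2).1)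
  ((coords chi1).2 + (coords chi2).2)).
  by rewrite /dual_to_transpose raddfD pairD piD.
split=> [i|j].
  by rewrite mu_ofD raddfD /= muE1 muE2 /charK chi3E.
by rewrite tau_ofD raddfD /= tauE1 tauE2 /charY chi3E.
Qed.

Lemma qL_pi (beta : 'M[int]_l) c y :
  qL R (\pi_(L p lam beta) (c, y)) = \row_k circ (mu_of y k).
Proof.
apply/rowP => k; rewrite !mxE -[\pi_(circle R) _]/(circ (mu_of _ k)).
set v := \pi_(L p lam beta) (c, y).
have /quotZ_eqP [x /(congr1 snd) /= rE] : \pi_(L p lam beta) (repr v) = v.
  by rewrite reprK.
have -> : (repr v).2 = y - plam p lam x by rewrite -rE addrC subrK.
by rewrite mu_of_shift raddfB /= circ_intr subr0.
Qed.

Lemma pairing_row (v : 'I_l -> R) (x : Zp) :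
  pairing (\row_k circ (v k)) x = circ (dotR v (repr x)).
Proof. by rewrite circ_dotR; apply: eq_bigr => i _; rewrite mxE. Qed.

Lemma dotR_mu_of0 c : dotR (mu_of 0) c = 0.
Proof. by rewrite dotR_mu_ofC raddf0. Qed.

Lemma dual_to_transpose_pairing x chi :
  (forall v, sval chi v = pairing (qL R v) x) ->
  dual_to_transpose chi = fL alpha^T x.
Proof.
move=> chiE; rewrite (@dual_to_transposeE _ (repr x) 0) /fL.
  by rewrite /toZplam reprK.
split=> [i|j]; rewrite /charK /charY chiE qL_pi pairing_row.
  by rewrite dotR_mu_of0 /mu_of mxE mul0r.
by rewrite /tau_of dotR_mu_of0 addr0 dotR_mu_ofC dotR_delta.
Qed.

Lemma pairing_dual_to_transpose chi c :
  pairing (qL R (dual_to_transpose chi)) c = sval chi (fL alpha c).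
Proof.
have [muE _] := coordsP chi.
rewrite /dual_to_transpose qL_pi pairing_row circ_dotR -[c in RHS]reprK.
rewrite -[\pi_Zp _]/(tZ _) -/(charK chi _) [RHS]raddf_row_sum_delta.
by apply: eq_bigr => i _; rewrite muE.
Qed.

End Duality.

Theorem theorem10p3 (R : realType) (p l : nat) (lam : 'I_l -> nat)
    (alpha : 'M[int]_l) :
  prime p ->
  (forall i, (0 < lam i)%N) ->
  (forall i j : 'I_l, (i <= j)%N -> (lam j <= lam i)%N) ->
  exists Phi : Pdual R (L p lam alpha) -> L p lam alpha^T,
    [/\ bijective Phi,
        (forall chi1 chi2 chi3 : Pdual R (L p lam alpha),
            (forall a, sval chi3 a = sval chi1 a + sval chi2 a) ->
            Phi chi3 = Phi chi1 + Phi chi2),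
        (forall (x : Zplam p lam) (chi : Pdual R (L p lam alpha)),
            (forall v, sval chi v = pairing (qL R v) x) ->
            Phi chi = fL alpha^T x)
      & (forall (chi : Pdual R (L p lam alpha)) (c : Zplam p lam),
            pairing (qL R (Phi chi)) c = sval chi (fL alpha c))].
Proof.
move=> /prime_gt0 p_gt0 _ _.
exists (dual_to_transpose p_gt0); split.
- exists (transpose_to_dual R p_gt0).
    exact: dual_to_transposeK.
  exact: transpose_to_dualK.
- exact: dual_to_transposeD.
- exact: dual_to_transpose_pairing.
- exact: pairing_dual_to_transpose.
Qed.
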